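(* Let $(x,b)$ be a \textsc{Set Radius Strip Cover} instance with $n$ sensors and optimal lifetime $T$. Add two dummy sensors: sensor $0$ with $x_0=0$, $b_0=0$, and sensor $n+1$ with $x_{n+1}=1$, $b_{n+1}=0$. Then there exist $i,k\in\{0,\ldots,n+1\}$ with $i<k$ and $x_i<x_k$ such that $T=\frac{b_k+b_i}{x_k-x_i}$.
   Context: \textsc{Set Radius Strip Cover}: An instance is a pair $(x,b)$, where $x=(x_1,\ldots,x_n)\in[0,1]^n$ with $x_1\le\cdots\le x_n$ are sensor locations and $b=(b_1,\ldots,b_n)$, $b_i\ge0$ rational, are battery charges. A solution is a radial assignment $\rho\in[0,\infty)^n$; all sensors are activated at time $0$. Sensor $i$ with $\rho_i>0$ covers $[x_i-\rho_i,x_i+\rho_i]$ during $[0,b_i/\rho_i]$; a sensor with $\rho_i=0$ is inactive and covers nothing. The lifetime of $\rho$ is the maximum $T$ such that for every $t\in[0,T]$, $[0,1]\subseteq\bigcup_{i:\rho_i>0,\ b_i/\rho_i\ge t}[x_i-\rho_i,x_i+\rho_i]$; the optimal lifetime is the maximum lifetime over all radial assignments. *)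

From Stdlib Require Import Reals QArith Qreals Lra Arith.
Open Scope R_scope.

(* Sensors are indexed 1..n.  x i = location, b i = battery (rational). *)

Definition valid_instance (n : nat) (x : nat -> R) (b : nat -> Q) : Prop :=
  (forall i, (1 <= i <= n)%nat -> 0 <= x i <= 1) /\
  (forall i j, (1 <= i)%nat -> (i <= j)%nat -> (j <= n)%nat -> x i <= x j) /\
  (forall i, (1 <= i <= n)%nat -> (0 <= b i)%Q).

Definition radial (n : nat) (rho : nat -> R) : Prop :=
  forall i, (1 <= i <= n)%nat -> 0 <= rho i.

Definition covered_at (n : nat) (x : nat -> R) (b : nat -> Q)
    (rho : nat -> R) (t : R) : Prop :=
  forall p, 0 <= p <= 1 ->
    exists i, (1 <= i <= n)%nat /\ 0 < rho i /\ t <= Q2R (b i) / rho i /\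
              x i - rho i <= p <= x i + rho i.

Definition covers_until (n : nat) (x : nat -> R) (b : nat -> Q)
    (rho : nat -> R) (L : R) : Prop :=
  0 <= L /\ forall t, 0 <= t <= L -> covered_at n x b rho t.

Definition is_lifetime (n : nat) (x : nat -> R) (b : nat -> Q)
    (rho : nat -> R) (L : R) : Prop :=
  covers_until n x b rho L /\
  (forall L', covers_until n x b rho L' -> L' <= L).

Definition optimal_lifetime (n : nat) (x : nat -> R) (b : nat -> Q) (T : R)
  : Prop :=
  (exists rho, radial n rho /\ is_lifetime n x b rho T) /\
  (forall rho L, radial n rho -> is_lifetime n x b rho L -> L <= T).

Definition xext (n : nat) (x : nat -> R) (i : nat) : R :=
  if Nat.eqb i 0 then 0 else if Nat.eqb i (S n) then 1 else x i.

Definition bext (n : nat) (b : nat -> Q) (i : nat) : R :=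
  if Nat.eqb i 0 then 0 else if Nat.eqb i (S n) then 0 else Q2R (b i).

From Stdlib Require Import Reals QArith Qreals Arith.
From Stdlib Require Import List Lra Lia Classical.
Open Scope R_scope.

(* If no ratio (b_k + b_i) / (x_k - x_i) lies in (T, T + e], then the uniform
   assignment rho_j = b_j / (T + e), whose lifetime is T + e whenever it covers,
   must leave some point p uncovered.  The sensors whose intervals lie left of p
   remain disjoint from those right of p after shrinking time to T, because being
   separated at time tau means exactly that the pair's ratio is at most tau.  In an
   optimal assignment every radius is at most b_j / T, so the intervals of radius
   b_j / T cover [0,1]; the largest right end A of a left interval and the
   smallest left end C of a right interval therefore meet, and A = C says that T
   is the ratio of that pair.  The dummy sensors 0 and n+1, degenerate intervals
   at the ends of [0,1], keep both sides nonempty. *)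

Lemma finite_gap (l : list R) (T : R) :
  exists e, 0 < e /\ forall y, In y l -> y <= T \/ T + e < y.
Proof.
  induction l as [|y l [e [He Hl]]].
  - exists 1; split; [lra | intros y []].
  - destruct (Rle_dec y T) as [Hy|Hy].
    + exists e; split; [exact He|].
      intros z [<-|Hz]; [left; exact Hy | auto].
    + exists (Rmin e ((y - T) / 2)); split; [apply Rmin_pos; lra|].
      pose proof (Rmin_l e ((y - T) / 2)); pose proof (Rmin_r e ((y - T) / 2)).
      intros z [<-|Hz]; [right; lra|].
      destruct (Hl z Hz); [left | right]; lra.
Qed.

Lemma finite_gap2 (v : nat -> nat -> R) (T : R) (N : nat) :
  exists e, 0 < e /\ forall i k, (i <= N)%nat -> (k <= N)%nat ->
    v i k <= T \/ T + e < v i k.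
Proof.
  set (f := fun ik : nat * nat => v (fst ik) (snd ik)).
  set (idx := seq 0 (S N)).
  destruct (finite_gap (map f (list_prod idx idx)) T) as [e [He Hgap]].
  exists e; split; [exact He|].
  intros i k Hi Hk. apply (Hgap (f (i, k))), in_map, in_prod; apply in_seq; lia.
Qed.

Lemma bounded_argmax (P : nat -> Prop) (g : nat -> R) (N : nat) :
  (exists w, (w <= N)%nat /\ P w) ->
  exists i, (i <= N)%nat /\ P i /\ forall j, (j <= N)%nat -> P j -> g j <= g i.
Proof.
  induction N as [|N IH]; intros [w [Hw Pw]].
  - assert (w = 0%nat) as -> by lia.
    exists 0%nat; repeat split; auto.
    intros j Hj _; assert (j = 0%nat) as -> by lia; lra.
  - destruct (classic (exists w, (w <= N)%nat /\ P w)) as [Hex|Hnone].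
    + destruct (IH Hex) as [i [Hi [Pi Hmax]]].
      destruct (classic (P (S N) /\ g i <= g (S N))) as [[PS Hle]|Hnot].
      * exists (S N); repeat split; auto.
        intros j Hj Pj; destruct (Nat.eq_dec j (S N)) as [->|]; [lra|].
        specialize (Hmax j ltac:(lia) Pj); lra.
      * exists i; repeat split; auto.
        intros j Hj Pj; destruct (Nat.eq_dec j (S N)) as [->|]; [|apply Hmax; auto; lia].
        destruct (Rle_dec (g i) (g (S N))); [tauto | lra].
    + assert (w = S N) as ->.
      { destruct (Nat.eq_dec w (S N)); auto. exfalso; apply Hnone; exists w; split; auto; lia. }
      exists (S N); repeat split; auto.
      intros j Hj Pj; destruct (Nat.eq_dec j (S N)) as [->|]; [lra|].
      exfalso; apply Hnone; exists j; split; auto; lia.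
Qed.

Lemma div_le_iff (a c t : R) : 0 < c -> (a / c <= t <-> a <= t * c).
Proof.
  intros Hc; split; intros H.
  - replace a with (a / c * c) by (field; lra). apply Rmult_le_compat_r; lra.
  - apply (Rmult_le_reg_r c); [exact Hc|]. replace (a / c * c) with a by (field; lra). exact H.
Qed.

Lemma separated_iff_ratio_le (xi xk bi bk tau : R) : 0 < tau -> xi < xk ->
  (xi + bi / tau <= xk - bk / tau <-> (bk + bi) / (xk - xi) <= tau).
Proof.
  intros Htau Hx.
  rewrite (div_le_iff (bk + bi) (xk - xi) tau) by lra.
  assert (Hsum : bi / tau + bk / tau = (bk + bi) / tau) by (field; lra).
  split; intros H.
  - assert ((bk + bi) / tau <= xk - xi) as Hd by lra.
    apply div_le_iff in Hd; [rewrite Rmult_comm; exact Hd | exact Htau].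
  - rewrite Rmult_comm in H. apply div_le_iff in H; [lra | exact Htau].
Qed.

Lemma touching_ratio_eq (xi xk bi bk tau : R) : 0 < tau -> xi < xk ->
  xi + bi / tau = xk - bk / tau -> tau = (bk + bi) / (xk - xi).
Proof.
  intros Htau Hx H.
  assert (E : bk + bi = tau * (xk - xi)).
  { replace (bk + bi) with ((bi / tau + bk / tau) * tau) by (field; lra).
    replace (bi / tau + bk / tau) with (xk - xi) by lra. ring. }
  rewrite E; field; lra.
Qed.

Lemma Q2R_nonneg (q : Q) : (0 <= q)%Q -> 0 <= Q2R q.
Proof. intros H. rewrite <- RMicromega.Q2R_0. now apply Qle_Rle. Qed.

Definition uniform_radius (b : nat -> Q) (tau : R) (j : nat) : R := Q2R (b j) / tau.

Section Instance.

Variables (n : nat) (x : nat -> R) (b : nat -> Q).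

Lemma xext_real i : (1 <= i <= n)%nat -> xext n x i = x i.
Proof.
  intros Hi; unfold xext.
  destruct (Nat.eqb_spec i 0); [lia|]. destruct (Nat.eqb_spec i (S n)); [lia | reflexivity].
Qed.

Lemma bext_real i : (1 <= i <= n)%nat -> bext n b i = Q2R (b i).
Proof.
  intros Hi; unfold bext.
  destruct (Nat.eqb_spec i 0); [lia|]. destruct (Nat.eqb_spec i (S n)); [lia | reflexivity].
Qed.

Lemma xext_last : xext n x (S n) = 1.
Proof. unfold xext; simpl; now rewrite Nat.eqb_refl. Qed.

Lemma bext_last : bext n b (S n) = 0.
Proof. unfold bext; simpl; now rewrite Nat.eqb_refl. Qed.

Definition left_end (tau : R) (j : nat) : R := xext n x j - bext n b j / tau.
Definition right_end (tau : R) (j : nat) : R := xext n x j + bext n b j / tau.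
Definition touch_ratio (i k : nat) : R :=
  (bext n b k + bext n b i) / (xext n x k - xext n x i).

Lemma uniform_radius_duration tau j :
  0 < uniform_radius b tau j -> Q2R (b j) / uniform_radius b tau j = tau.
Proof.
  unfold uniform_radius; intros Hr.
  assert (Q2R (b j) <> 0) by (intros Hz; rewrite Hz in Hr; unfold Rdiv in Hr; lra).
  assert (tau <> 0) by (intros Hz; rewrite Hz in Hr; unfold Rdiv in Hr; rewrite Rinv_0 in Hr; lra).
  field; auto.
Qed.

(* Every active sensor of the uniform assignment dies exactly at [tau]. *)
Lemma uniform_radius_lifetime tau :
  0 <= tau -> covered_at n x b (uniform_radius b tau) tau ->
  is_lifetime n x b (uniform_radius b tau) tau.
Proof.
  intros Htau Hcov; split.
  - split; [exact Htau|]. intros t Ht p Hp.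
    destruct (Hcov p Hp) as [j [Hj [Hr [Hdur Hpj]]]].
    exists j; split; [exact Hj|]; repeat split; lra.
  - intros L [HL HcovL].
    destruct (Rle_dec L tau) as [|Hgt]; [assumption|].
    destruct (HcovL L (conj HL (Rle_refl L)) 0 ltac:(lra)) as [j [_ [Hr [Hdur _]]]].
    rewrite uniform_radius_duration in Hdur by exact Hr. lra.
Qed.

Hypothesis Hvalid : valid_instance n x b.

Lemma xext_range i : (i <= S n)%nat -> 0 <= xext n x i <= 1.
Proof.
  destruct Hvalid as [Hx _]; intros Hi.
  destruct (Nat.eq_dec i 0) as [->|]; [cbn; lra|].
  destruct (Nat.eq_dec i (S n)) as [->|]; [rewrite xext_last; lra|].
  rewrite xext_real by lia. apply Hx; lia.
Qed.

Lemma bext_nonneg i : (i <= S n)%nat -> 0 <= bext n b i.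
Proof.
  destruct Hvalid as [_ [_ Hb]]; intros Hi.
  destruct (Nat.eq_dec i 0) as [->|]; [cbn; lra|].
  destruct (Nat.eq_dec i (S n)) as [->|]; [rewrite bext_last; lra|].
  rewrite bext_real by lia. apply Q2R_nonneg, Hb; lia.
Qed.

Lemma xext_mono i j : (i <= j)%nat -> (j <= S n)%nat -> xext n x i <= xext n x j.
Proof.
  intros Hij Hj.
  pose proof (xext_range i ltac:(lia)); pose proof (xext_range j Hj).
  destruct (Nat.eq_dec i 0) as [->|]; [cbn in *; lra|].
  destruct (Nat.eq_dec j (S n)) as [->|]; [rewrite xext_last; lra|].
  destruct Hvalid as [_ [Hmono _]].
  rewrite !xext_real by lia. apply Hmono; lia.
Qed.

Lemma uniform_radius_radial tau : 0 < tau -> radial n (uniform_radius b tau).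
Proof.
  intros Htau i Hi. unfold uniform_radius.
  rewrite <- bext_real by exact Hi.
  apply Rmult_le_pos; [apply bext_nonneg; lia | left; apply Rinv_0_lt_compat, Htau].
Qed.

Lemma end_bounds tau j : 0 < tau -> (j <= S n)%nat ->
  left_end tau j <= xext n x j <= right_end tau j.
Proof.
  intros Htau Hj. unfold left_end, right_end.
  assert (0 <= bext n b j / tau).
  { apply Rmult_le_pos; [apply bext_nonneg, Hj | left; apply Rinv_0_lt_compat, Htau]. }
  lra.
Qed.

Lemma right_end_first tau : right_end tau 0 = 0.
Proof. unfold right_end; cbn; unfold Rdiv; ring. Qed.

Lemma left_end_last tau : left_end tau (S n) = 1.
Proof. unfold left_end; rewrite xext_last, bext_last; unfold Rdiv; ring. Qed.

Lemma exposed_point T tau : optimal_lifetime n x b T -> T < tau ->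
  exists p, 0 <= p <= 1 /\ forall j, (1 <= j <= n)%nat -> 0 < Q2R (b j) ->
    p < left_end tau j \/ right_end tau j < p.
Proof.
  intros [[rho [_ [[HT _] _]]] Hopt] Htau.
  assert (Hnc : ~ covered_at n x b (uniform_radius b tau) tau).
  { intros Hcov.
    pose proof (Hopt _ _ (uniform_radius_radial tau ltac:(lra))
                  (uniform_radius_lifetime tau ltac:(lra) Hcov)).
    lra. }
  apply not_all_ex_not in Hnc as [p Hp]. apply imply_to_and in Hp as [Hp Hunc].
  exists p; split; [exact Hp|]. intros j Hj Hbj.
  destruct (Rlt_dec p (left_end tau j)) as [|Hl]; [left; assumption|].
  destruct (Rlt_dec (right_end tau j) p) as [|Hr]; [right; assumption|].
  exfalso; apply Hunc; exists j.
  assert (Hrad : 0 < uniform_radius b tau j) by (apply Rdiv_lt_0_compat; lra).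
  rewrite uniform_radius_duration by exact Hrad.
  unfold left_end, right_end, uniform_radius in *.
  rewrite xext_real, bext_real in * by exact Hj.
  split; [exact Hj|]; repeat split; lra.
Qed.

Lemma cover_within_uniform T rho : 0 < T -> covered_at n x b rho T ->
  forall q, 0 <= q <= 1 -> exists j, (1 <= j <= n)%nat /\ 0 < Q2R (b j) /\
    left_end T j <= q <= right_end T j.
Proof.
  intros HT Hcov q Hq.
  destruct (Hcov q Hq) as [j [Hj [Hr [Hdur Hqj]]]].
  exists j. unfold left_end, right_end. rewrite xext_real, bext_real by exact Hj.
  set (bj := Q2R (b j)) in *.
  apply (Rmult_le_compat_r (rho j)) in Hdur; [|lra].
  replace (bj / rho j * rho j) with bj in Hdur by (field; lra).
  assert (rho j <= bj / T).
  { apply (Rmult_le_reg_r T); [exact HT|].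
    replace (bj / T * T) with bj by (field; lra). nra. }
  split; [exact Hj|]; split; [nra | lra].
Qed.

Definition left_of (tau p : R) (j : nat) : Prop :=
  j = 0%nat \/ ((1 <= j <= n)%nat /\ 0 < Q2R (b j) /\ right_end tau j < p).

Definition right_of (tau p : R) (l : nat) : Prop :=
  l = S n \/ ((1 <= l <= n)%nat /\ 0 < Q2R (b l) /\ p < left_end tau l).

Lemma left_right_separated tau p j l : 0 < tau -> 0 <= p <= 1 ->
  left_of tau p j -> right_of tau p l ->
  ((j <= S n)%nat /\ (l <= S n)%nat) /\
  xext n x j < xext n x l /\ right_end tau j <= left_end tau l.
Proof.
  intros Htau Hp Hj Hl.
  assert (Hjn : (j <= S n)%nat) by (destruct Hj as [->|[? _]]; lia).
  assert (Hln : (l <= S n)%nat) by (destruct Hl as [->|[? _]]; lia).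
  pose proof (end_bounds tau j Htau Hjn); pose proof (end_bounds tau l Htau Hln).
  split; [split; assumption|].
  destruct Hj as [->|[_ [_ Hj]]]; destruct Hl as [->|[_ [_ Hl]]];
    rewrite ?right_end_first, ?left_end_last in *; cbn [xext Nat.eqb] in *; lra.
Qed.

Section Threshold.

Variables (T tau p : R).
Hypotheses (HT : 0 < T) (HTtau : T < tau) (Hp : 0 <= p <= 1).
Hypothesis Hgap : forall i k, (i <= S n)%nat -> (k <= S n)%nat ->
  touch_ratio i k <= T \/ tau < touch_ratio i k.
Hypothesis Hexposed : forall j, (1 <= j <= n)%nat -> 0 < Q2R (b j) ->
  p < left_end tau j \/ right_end tau j < p.
Hypothesis Hcover : forall q, 0 <= q <= 1 -> exists j, (1 <= j <= n)%nat /\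
  0 < Q2R (b j) /\ left_end T j <= q <= right_end T j.

Lemma separated_at_threshold j l : left_of tau p j -> right_of tau p l ->
  xext n x j < xext n x l /\ right_end T j <= left_end T l.
Proof.
  intros Hj Hl.
  destruct (left_right_separated tau p j l ltac:(lra) Hp Hj Hl)
    as [[Hjn Hln] [Hx Hsep]].
  split; [exact Hx|]. unfold right_end, left_end in *.
  apply separated_iff_ratio_le in Hsep; [|lra | exact Hx].
  apply separated_iff_ratio_le; [exact HT | exact Hx |].
  destruct (Hgap j l Hjn Hln) as [H|H]; [exact H | unfold touch_ratio in H; lra].
Qed.

Lemma threshold_is_touch_ratio : exists i k, (i < k)%nat /\ (k <= S n)%nat /\
  xext n x i < xext n x k /\ T = touch_ratio i k.
Proof.
  destruct (bounded_argmax (left_of tau p) (right_end T) (S n)) as [i [Hi [Li Mi]]].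
  { exists 0%nat; split; [lia | left; reflexivity]. }
  destruct (bounded_argmax (right_of tau p) (fun l => - left_end T l) (S n))
    as [k [Hk [Rk Mk]]].
  { exists (S n); split; [lia | left; reflexivity]. }
  destruct (separated_at_threshold i k Li Rk) as [Hxik Hsep].
  assert (Htouch : right_end T i = left_end T k).
  { pose proof (end_bounds T i HT Hi); pose proof (end_bounds T k HT Hk).
    pose proof (xext_range i Hi); pose proof (xext_range k Hk).
    set (q := (right_end T i + left_end T k) / 2).
    destruct (Hcover q ltac:(unfold q; lra)) as [j [Hj [Hbj Hqj]]].
    destruct (Hexposed j Hj Hbj) as [Hr|Hl].
    - specialize (Mk j ltac:(lia) (or_intror (conj Hj (conj Hbj Hr)))).
      unfold q in Hqj; lra.
    - specialize (Mi j ltac:(lia) (or_intror (conj Hj (conj Hbj Hl)))).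
      unfold q in Hqj; lra. }
  exists i, k; repeat split; [| exact Hk | exact Hxik |].
  - destruct (le_lt_dec k i) as [Hki|]; [|assumption].
    pose proof (xext_mono k i Hki Hi); lra.
  - apply touching_ratio_eq; [exact HT | exact Hxik | exact Htouch].
Qed.

End Threshold.

End Instance.

Theorem lemma11 (n : nat) (x : nat -> R) (b : nat -> Q) (T : R) :
  valid_instance n x b ->
  optimal_lifetime n x b T ->
  exists i k : nat, (i < k)%nat /\ (k <= S n)%nat /\
    xext n x i < xext n x k /\
    T = (bext n b k + bext n b i) / (xext n x k - xext n x i).
Proof.
  intros Hvalid Hopt.
  pose proof Hopt as [[rho [_ [[HT0 Hcov] _]]] _].
  destruct (Req_dec T 0) as [->|HTne].
  { exists 0%nat, (S n). rewrite xext_last, bext_last; cbn.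
    repeat split; [lia | lia | lra | unfold Rdiv; ring]. }
  assert (HT : 0 < T) by lra.
  destruct (finite_gap2 (touch_ratio n x b) T (S n)) as [e [He Hgap]].
  destruct (exposed_point n x b Hvalid T (T + e) Hopt ltac:(lra)) as [p [Hp Hexp]].
  apply (threshold_is_touch_ratio n x b Hvalid T (T + e) p HT ltac:(lra) Hp Hgap Hexp).
  exact (cover_within_uniform n x b T rho HT (Hcov T (conj HT0 (Rle_refl T)))).
Qed.
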